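(* Let $f:\mathbb{R}^d\to\mathbb{R}$ be differentiable with $L$-Lipschitz continuous gradient $\nabla f$. Consider the SUM iteration with $\mu\in[0,1)$, $\lambda\in[0,1/(1-\mu)]$ and positive step sizes $\{\eta_t\}$, where the noisy gradients satisfy $\mathbb{E}_t[g_t]=\nabla f(x_t)$ and $\mathbb{E}\|g_t\|^2\le G^2$ for all $t$. Then for every $t\ge1$, $$\mathbb{E}\big[\nabla f(x_t)^T m_t\big]\le -\sum_{k=1}^{t}\mu^{t-k}\eta_k\,\mathbb{E}\|\nabla f(x_k)\|^2+2L\sum_{k=1}^{t-1}\mu^{t-k}\,\mathbb{E}\|m_k\|^2+L\lambda^2G^2\sum_{k=1}^{t-1}\mu^{t-k}\eta_k^2 .$$
   Context: Stochastic unified momentum (SUM) iteration: given $x_1\in\mathbb{R}^d$, set $m_0=0$ and for $t=1,2,\dots$ $$m_t=\mu m_{t-1}-\eta_t g_t,\qquad x_{t+1}=x_t-\lambda\eta_t g_t+(1-\tilde\lambda)m_t,\qquad \tilde\lambda:=(1-\mu)\lambda,$$ where $g_t\in\mathbb{R}^d$ is a random vector (noisy gradient). $\mathbb{E}_t[\cdot]$ denotes the conditional expectation given $g_1,\dots,g_{t-1}$ (so $x_t$ and $m_{t-1}$ are determined by the conditioning), and $\mathbb{E}$ the total expectation. Norms are Euclidean. *)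

From HB Require Import structures.
From mathcomp Require Import all_boot all_order all_algebra.
From mathcomp Require Import all_classical all_reals all_analysis.
Set Implicit Arguments. Unset Strict Implicit. Unset Printing Implicit Defensive.
Import Order.TTheory GRing.Theory Num.Theory.
Import numFieldNormedType.Exports.
Local Open Scope classical_set_scope.
Local Open Scope ring_scope.

Definition dotv (R : realType) (d : nat) (u v : 'rV[R]_d) : R :=
  \sum_(i < d) u 0 i * v 0 i.
Definition enorm (R : realType) (d : nat) (u : 'rV[R]_d) : R :=
  Num.sqrt (dotv u u).

(* SUM iteration for a fixed realisation of the noisy gradients g : nat -> R^d
   (g t = g_t for t >= 1).  sum_state n = (x_{n+1}, m_n); sum_state 0 = (x_1, m_0 = 0). *)
Fixpoint sum_state (R : realType) (d : nat) (mu lam : R) (eta : nat -> R)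
  (x1 : 'rV[R]_d) (g : nat -> 'rV[R]_d) (n : nat) : 'rV[R]_d * 'rV[R]_d :=
  match n with
  | 0 => (x1, 0)
  | n'.+1 =>
      let st := sum_state mu lam eta x1 g n' in
      let m := mu *: st.2 - eta n'.+1 *: g n'.+1 in
      (st.1 - (lam * eta n'.+1) *: g n'.+1 + (1 - (1 - mu) * lam) *: m, m)
  end.

(* x_t (t >= 1) and m_t (t >= 0). *)
Definition sum_x (R : realType) (d : nat) (mu lam : R) (eta : nat -> R)
  (x1 : 'rV[R]_d) (g : nat -> 'rV[R]_d) (t : nat) : 'rV[R]_d :=
  (sum_state mu lam eta x1 g t.-1).1.
Definition sum_m (R : realType) (d : nat) (mu lam : R) (eta : nat -> R)
  (x1 : 'rV[R]_d) (g : nat -> 'rV[R]_d) (t : nat) : 'rV[R]_d :=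
  (sum_state mu lam eta x1 g t).2.

(* Generators of sigma(g_1, ..., g_{t-1}): preimages of Borel sets under the
   coordinates of g_k, 1 <= k < t. *)
Definition past_gen (dT : measure_display) (T : measurableType dT) (R : realType)
  (d : nat) (g : nat -> T -> 'rV[R]_d) (t : nat) : set (set T) :=
  [set A | exists k (i : 'I_d) (B : set R),
     [/\ (1 <= k < t)%N, measurable B & A = (fun w => g k w 0 i) @^-1` B]].

(* E_t[g_t] = Y : Y is the conditional expectation of g_t given sigma(g_1..g_{t-1}),
   i.e. g_t is integrable, Y is sigma(g_1..g_{t-1})-measurable and integrable, and
   the integrals of g_t and Y agree on every set of sigma(g_1..g_{t-1})
   (coordinatewise). *)
Definition cond_exp_past (dT : measure_display) (T : measurableType dT) (R : realType)
  (P : probability T R) (d : nat) (g : nat -> T -> 'rV[R]_d) (t : nat)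
  (Y : T -> 'rV[R]_d) : Prop :=
  forall i : 'I_d,
    [/\ P.-integrable setT (fun w => (g t w 0 i)%:E),
        P.-integrable setT (fun w => (Y w 0 i)%:E),
        (forall B : set R, measurable B ->
           <<s past_gen g t >> ((fun w => Y w 0 i) @^-1` B)) &
        (forall A : set T, <<s past_gen g t >> A ->
           (\int[P]_(w in A) (g t w 0 i)%:E = \int[P]_(w in A) (Y w 0 i)%:E)%E)].

From HB Require Import structures.
From mathcomp Require Import all_boot all_order all_algebra.
From mathcomp Require Import all_classical all_reals all_analysis.
From mathcomp Require Import ring lra measurable_realfun.
Set Implicit Arguments. Unset Strict Implicit. Unset Printing Implicit Defensive.
Import Order.TTheory GRing.Theory Num.Theory.
Import numFieldNormedType.Exports.
Local Open Scope classical_set_scope.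
Local Open Scope ring_scope.

(* Write a_t = E[grad f(x_t) . m_t], b_t = E|grad f(x_t)|^2 and c_t = E|m_t|^2.
   Since x_t is a function of g_1, ..., g_{t-1}, the tower property gives
   E[grad f(x_t) . g_t] = b_t, hence a_t = mu E[grad f(x_t) . m_{t-1}] - eta_t b_t.
   One step of the iteration moves x by -lam eta_t g_t + (1 - lam~) m_t with
   0 <= 1 - lam~ <= 1, so the Lipschitz bound and Young's inequality give
   E[grad f(x_{t+1}) . m_t] <= a_t + 2 L c_t + L lam^2 eta_t^2 G^2, and the
   resulting linear recursion for a_t unrolls to the claim.  The tower property
   is proved for nonnegative factors by dominated convergence along dyadic
   simple-function approximations, then in general via positive and negative
   parts. *)

Section real_integrable.
Context {R : realType} {dT : measure_display} {T : measurableType dT}.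
Variable P : probability T R.
Implicit Types (f h u v y z : T -> R).

Definition integrableR f := P.-integrable setT (EFin \o f).

Definition sq_integrable u :=
  measurable_fun setT u /\ integrableR (fun x => u x ^+ 2).

Lemma integrableR_measurable f : integrableR f -> measurable_fun setT f.
Proof. by move=> /integrableP[/measurable_EFinP]. Qed.

Lemma integrableRD f h : integrableR f -> integrableR h ->
  integrableR (fun x => f x + h x).
Proof. exact: integrableD. Qed.

Lemma integrableRZ c f : integrableR f -> integrableR (fun x => c * f x).
Proof. exact: integrableZl. Qed.

Lemma integrableR_cst c : integrableR (fun _ => c).
Proof. exact: finite_measure_integrable_cst. Qed.

Lemma integrableR_le f h : measurable_fun setT f -> integrableR h ->
  (forall x, `|f x| <= h x) -> integrableR f.
Proof.
move=> mf ih fh; apply: le_integrable ih => //; first exact/measurable_EFinP.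
by move=> x _ /=; rewrite !lee_fin (le_trans (fh x)) ?ler_norm.
Qed.

Lemma integrableR_sum (I : Type) (s : seq I) (F : I -> T -> R) :
  (forall i, integrableR (F i)) -> integrableR (fun x => \sum_(i <- s) F i x).
Proof.
move=> iF; rewrite /integrableR.
have -> : EFin \o (fun x => \sum_(i <- s) F i x) = (fun x => \sum_(i <- s) (F i x)%:E)%E.
  by apply/funext => x /=; rewrite sumEFin.
by apply: integrable_sum => // i _; exact: iF.
Qed.

Lemma Rintegral_sum (I : Type) (s : seq I) (F : I -> T -> R) :
  (forall i, integrableR (F i)) ->
  \int[P]_x (\sum_(i <- s) F i x) = \sum_(i <- s) \int[P]_x F i x.
Proof.
move=> iF; elim: s => [|i s IH].
  by under eq_fun do rewrite big_nil; rewrite big_nil Rintegral_cst // mul0r.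
rewrite big_cons -IH -RintegralD //; [|exact: iF|exact: integrableR_sum].
by apply: eq_Rintegral => x _; rewrite big_cons.
Qed.

Lemma Rintegral_EFin f : integrableR f ->
  (\int[P]_x (f x)%:E)%E = (\int[P]_x f x)%:E.
Proof. by move=> i_f; rewrite /Rintegral fineK //; exact: integrable_fin_num. Qed.

Lemma sq_integrable_cst c : sq_integrable (fun _ => c).
Proof. by split; [exact: measurable_cst | exact: integrableR_cst]. Qed.

Lemma sq_integrable_mul u v : sq_integrable u -> sq_integrable v ->
  integrableR (fun x => u x * v x).
Proof.
move=> [mu iu] [mv iv]; apply: (integrableR_le _ (integrableRD iu iv)) => [|x].
  exact: measurable_funM.
rewrite normrM -(real_normK (num_real (u x))) -(real_normK (num_real (v x))).
have := sqr_ge0 (`|u x| - `|v x|); have := normr_ge0 (u x); have := normr_ge0 (v x).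
nra.
Qed.

Lemma sq_integrableD u v : sq_integrable u -> sq_integrable v ->
  sq_integrable (fun x => u x + v x).
Proof.
move=> [mu iu] [mv iv]; split; first exact: measurable_funD.
apply: (integrableR_le _ (integrableRD (integrableRZ 2 iu) (integrableRZ 2 iv))) => [|x].
  exact/measurable_funX/measurable_funD.
rewrite ger0_norm ?sqr_ge0 //; have := sqr_ge0 (u x - v x); nra.
Qed.

Lemma sq_integrableZ c u : sq_integrable u -> sq_integrable (fun x => c * u x).
Proof.
move=> [mu iu]; split; first exact: measurable_funM (measurable_cst c) mu.
by under eq_fun do rewrite exprMn; exact: integrableRZ.
Qed.

Lemma sq_integrable_le u v : measurable_fun setT u -> integrableR v ->
  (forall x, u x ^+ 2 <= v x) -> sq_integrable u.
Proof.
move=> mu iv uv; split => //; apply: (integrableR_le _ iv) => [|x].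
  exact: measurable_funX.
by rewrite ger0_norm ?sqr_ge0.
Qed.

End real_integrable.

Section funrposneg_norm.
Context {I : Type} {R : realDomainType}.
Variable f : I -> R.

Lemma funrposDneg_norm x : f^\+ x + f^\- x = `|f x|.
Proof. by have /(congr1 (@^~ x)) := funrposDneg f. Qed.

Lemma normr_funrpos_le x : `|f^\+ x| <= `|f x|.
Proof. by rewrite ger0_norm ?funrpos_ge0 // -funrposDneg_norm lerDl funrneg_ge0. Qed.

Lemma normr_funrneg_le x : `|f^\- x| <= `|f x|.
Proof. by rewrite ger0_norm ?funrneg_ge0 // -funrposDneg_norm lerDr funrpos_ge0. Qed.

End funrposneg_norm.

Section tower_property.
Context {R : realType} {dT : measure_display} {T : measurableType dT}.
Variable P : probability T R.
Variable S : set T -> Prop.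
Hypothesis S_measurable : forall A, S A -> measurable A.
Variables z y : T -> R.
Hypotheses (z_int : integrableR P z) (y_int : integrableR P y).
Hypothesis S_integral_eq : forall A, S A ->
  (\int[P]_(x in A) (z x)%:E = \int[P]_(x in A) (y x)%:E)%E.

Definition same_weighted_mean (phi : T -> R) :=
  [/\ integrableR P (fun x => phi x * z x), integrableR P (fun x => phi x * y x) &
      \int[P]_x (phi x * z x) = \int[P]_x (phi x * y x)].

Lemma integrableR_indic_mul A (u : T -> R) : measurable A -> integrableR P u ->
  integrableR P (fun x => \1_A x * u x).
Proof.
move=> mA iu; have : P.-integrable setT ((EFin \o u) \_ A).
  by apply/(integrable_mkcond _ mA); exact: integrableS iu.
apply: eq_integrable => // x _ /=; rewrite /restrict indicE.
by case: (x \in A); rewrite /= ?mul1r ?mul0r.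
Qed.

Lemma Rintegral_indic_mul A (u : T -> R) :
  \int[P]_x (\1_A x * u x) = fine (\int[P]_(x in A) (u x)%:E)%E.
Proof.
rewrite /Rintegral [in RHS]integral_mkcond; congr fine; apply: eq_integral => x _.
by rewrite /restrict indicE; case: (x \in A); rewrite /= ?mul1r ?mul0r.
Qed.

Lemma same_weighted_mean_indic A : S A -> same_weighted_mean (\1_A).
Proof.
move=> SA; have mA := S_measurable SA.
split; [exact: integrableR_indic_mul | exact: integrableR_indic_mul |].
by rewrite !Rintegral_indic_mul S_integral_eq.
Qed.

Lemma same_weighted_mean0 : same_weighted_mean (fun _ => 0).
Proof.
have zero u : (fun x => 0 * u x) = (fun _ : T => 0 : R).
  by apply/funext => x; rewrite mul0r.
by rewrite /same_weighted_mean !zero; split => //; exact: integrableR_cst.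
Qed.

Lemma same_weighted_meanZ c phi : same_weighted_mean phi ->
  same_weighted_mean (fun x => c * phi x).
Proof.
move=> [iz iy E].
have assoc u : (fun x => c * phi x * u x) = (fun x => c * (phi x * u x)).
  by apply/funext => x; rewrite mulrA.
rewrite /same_weighted_mean !assoc !RintegralZl // E.
by split => //; exact: integrableRZ.
Qed.

Lemma same_weighted_meanD phi psi : same_weighted_mean phi ->
  same_weighted_mean psi -> same_weighted_mean (fun x => phi x + psi x).
Proof.
move=> [iz iy E] [jz jy F].
have distr u : (fun x => (phi x + psi x) * u x) = (fun x => phi x * u x + psi x * u x).
  by apply/funext => x; rewrite mulrDl.
rewrite /same_weighted_mean !distr !RintegralD // E F.
by split => //; exact: integrableRD.
Qed.

Lemma same_weighted_mean_sum (I : Type) (s : seq I) (Q : pred I) (F : I -> T -> R) :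
  (forall i, same_weighted_mean (F i)) ->
  same_weighted_mean (fun x => \sum_(i <- s | Q i) F i x).
Proof.
move=> sF; elim: s => [|i s IH].
  by under eq_fun do rewrite big_nil; exact: same_weighted_mean0.
under eq_fun do rewrite big_cons.
by case: (Q i) => //; exact: same_weighted_meanD.
Qed.

Section nonneg_factor.
Variable h : T -> R.
Hypothesis h_S_measurable : forall B, measurable B -> S (h @^-1` B).
Hypothesis h_ge0 : forall x, 0 <= h x.

Let phi n := approx setT (EFin \o h) n.

(* Each dyadic approximation of [h] is a finite combination of indicators of
   level sets of [h], which lie in [S]. *)
Lemma same_weighted_mean_approx n : same_weighted_mean (phi n).
Proof.
apply: same_weighted_meanD.
  apply: same_weighted_mean_sum => k; apply/same_weighted_meanZ/same_weighted_mean_indic.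
  rewrite /dyadic_approx; case: ifP => _; last exact: (h_S_measurable measurable0).
  have -> : setT `&` [set x | (EFin \o h) x \in EFin @` [set` dyadic_itv R n k]]
          = h @^-1` [set` dyadic_itv R n k].
    apply/seteqP; split => x /=; first by move=> [_]; rewrite inE => -[r rI [<-]].
    by move=> hx; split => //; rewrite inE; exists (h x).
  by apply: h_S_measurable; exact: measurable_itv.
apply/same_weighted_meanZ/same_weighted_mean_indic; rewrite /integer_approx.
have -> : setT `&` [set x | (n%:R%:E <= (EFin \o h) x)%E] = h @^-1` `[n%:R, +oo[%classic.
  by apply/seteqP; split => x /=; rewrite in_itv /= andbT lee_fin => // -[].
by apply: h_S_measurable; exact: measurable_itv.
Qed.

Lemma approx_ge0 n x : 0 <= phi n x.
Proof.
apply: addr_ge0; last by rewrite indicE mulr_ge0.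
by apply: sumr_ge0 => k _; rewrite indicE !mulr_ge0.
Qed.

Lemma approx_le n x : phi n x <= h x.
Proof. by rewrite -lee_fin; apply: le_approx => // u _; rewrite lee_fin. Qed.

Lemma integral_approx_mul_cvg (u : T -> R) :
  (forall n, integrableR P (fun x => phi n x * u x)) -> integrableR P (fun x => h x * u x) ->
  (\int[P]_x ((phi n x * u x)%:E))%E @[n --> \oo] --> (\int[P]_x ((h x * u x)%:E))%E.
Proof.
move=> iphi ih.
have pointwise : {ae P, forall x, setT x ->
    (fun n => (phi n x * u x)%:E) @ \oo --> (h x * u x)%:E}.
  apply: aeW => x _; apply: cvg_EFin; first by apply: nearW.
  rewrite (_ : fine \o _ = (fun n => phi n x * u x)); last exact/funext.
  apply: cvgMr_tmp.
  exact: (@cvg_approx _ _ _ setT (EFin \o h) x (fun v _ => h_ge0 v) Logic.I (ltry _)).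
have dominated : {ae P, forall x n, setT x ->
    (`|(phi n x * u x)%:E| <= (`|h x * u x|)%:E)%E}.
  apply: aeW => x n _; rewrite /= lee_fin !normrM ler_wpM2r //.
  by rewrite !ger0_norm ?approx_le ?approx_ge0.
by have [] := dominated_convergence measurableT (fun n => measurable_int _ (iphi n))
  (measurable_int _ ih) pointwise (integrable_abse ih) dominated.
Qed.

Lemma tower_property_ge0 : integrableR P (fun x => h x * z x) ->
  integrableR P (fun x => h x * y x) ->
  \int[P]_x (h x * z x) = \int[P]_x (h x * y x).
Proof.
move=> ihz ihy; have sphi := same_weighted_mean_approx.
have cz := integral_approx_mul_cvg (fun n => let: And3 i _ _ := sphi n in i) ihz.
have cy := integral_approx_mul_cvg (fun n => let: And3 _ i _ := sphi n in i) ihy.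
have approx_eq : (fun n => \int[P]_x ((phi n x * z x)%:E))%E =
                 (fun n => \int[P]_x ((phi n x * y x)%:E))%E.
  by apply/funext => n; case: (sphi n) => iz iy E; rewrite !Rintegral_EFin // E.
rewrite approx_eq in cz.
apply: EFin_inj; rewrite -!Rintegral_EFin //.
by rewrite -(cvg_lim (@ereal_hausdorff R) cz) -(cvg_lim (@ereal_hausdorff R) cy).
Qed.

End nonneg_factor.

Lemma tower_property (h : T -> R) :
  (forall B, measurable B -> S (h @^-1` B)) ->
  integrableR P (fun x => h x * z x) -> integrableR P (fun x => h x * y x) ->
  \int[P]_x (h x * z x) = \int[P]_x (h x * y x).
Proof.
move=> hS ihz ihy.
have mh : measurable_fun setT h.
  by move=> _ B mB; rewrite setTI; exact/S_measurable/hS.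
have mpos := measurable_funrpos (@measurable_id _ R setT).
have mneg := measurable_funrneg (@measurable_id _ R setT).
have part_S (k : R -> R) : measurable_fun setT k ->
    forall B, measurable B -> S ((k \o h) @^-1` B).
  by move=> mk B mB; have := hS _ (mk measurableT _ mB); rewrite setTI.
have part_int (k : R -> R) (u : T -> R) : measurable_fun setT k ->
    (forall r, `|k r| <= `|r|) -> integrableR P u -> integrableR P (fun x => h x * u x) ->
    integrableR P (fun x => k (h x) * u x).
  move=> mk kle iu ihu; apply: (integrableR_le _ (integrable_norm ihu)) => [|x].
    exact/measurable_funM/(integrableR_measurable iu)/(measurableT_comp mk mh).
  by rewrite /= !normrM ler_wpM2r.
have pos_int u := part_int _ u mpos (normr_funrpos_le id).
have neg_int u := part_int _ u mneg (normr_funrneg_le id).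
have split_int (u : T -> R) : integrableR P u -> integrableR P (fun x => h x * u x) ->
    \int[P]_x (h x * u x) =
    \int[P]_x ((@id R)^\+ (h x) * u x) - \int[P]_x ((@id R)^\- (h x) * u x).
  move=> iu ihu; rewrite -RintegralB //; [|exact: pos_int | exact: neg_int].
  apply: eq_Rintegral => x _; rewrite -mulrBl; congr (_ * _).
  by have /(congr1 (@^~ (h x))) := funrposBneg (@id R).
rewrite !split_int //; congr (_ - _).
- apply: (tower_property_ge0 (part_S _ mpos) (fun x => funrpos_ge0 id (h x)));
    exact: pos_int.
- apply: (tower_property_ge0 (part_S _ mneg) (fun x => funrneg_ge0 id (h x)));
    exact: neg_int.
Qed.

End tower_property.

Section dotv.
Context {R : realType} {d : nat}.
Implicit Types (u v w z m : 'rV[R]_d).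

Lemma dotv_ge0 u : 0 <= dotv u u.
Proof. by apply: sumr_ge0 => i _; rewrite -expr2 sqr_ge0. Qed.

Lemma sqr_enorm u : enorm u ^+ 2 = dotv u u.
Proof. by rewrite /enorm sqr_sqrtr // dotv_ge0. Qed.

Lemma dotvDl u v w : dotv (v + w) u = dotv v u + dotv w u.
Proof. by rewrite /dotv -big_split; apply: eq_bigr => i _; rewrite mxE mulrDl. Qed.

Lemma dotvZl a u v : dotv (a *: v) u = a * dotv v u.
Proof. by rewrite /dotv mulr_sumr; apply: eq_bigr => i _; rewrite mxE mulrA. Qed.

Lemma dotvC u v : dotv u v = dotv v u.
Proof. by apply: eq_bigr => i _; rewrite mulrC. Qed.

Lemma dotvZr a u v : dotv u (a *: v) = a * dotv u v.
Proof. by rewrite dotvC dotvZl dotvC. Qed.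

Lemma dotvBl u v w : dotv (v - w) u = dotv v u - dotv w u.
Proof. by rewrite dotvDl -scaleN1r dotvZl mulN1r. Qed.

Lemma dotvBr u v w : dotv u (v - w) = dotv u v - dotv u w.
Proof. by rewrite dotvC dotvBl !(dotvC u). Qed.

Lemma dotv0r u : dotv u 0 = 0.
Proof. by rewrite -(scale0r 0) dotvZr mul0r. Qed.

Lemma sqr_coord_le_dotv u i : u 0 i ^+ 2 <= dotv u u.
Proof.
rewrite /dotv (bigD1 i) //= -expr2 lerDl.
by apply: sumr_ge0 => j _; rewrite -expr2 sqr_ge0.
Qed.

Lemma dotv_self_eq0 u : dotv u u = 0 -> forall i, u 0 i = 0.
Proof.
move=> u0 i; apply/eqP; rewrite -sqrf_eq0 eq_le sqr_ge0 andbT -u0.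
exact: sqr_coord_le_dotv.
Qed.

Lemma dotvD_self_le u v : dotv (u + v) (u + v) <= 2 * dotv u u + 2 * dotv v v.
Proof.
rewrite /dotv !mulr_sumr -big_split /=; apply: ler_sum => i _.
rewrite mxE; have := sqr_ge0 (u 0 i - v 0 i); nra.
Qed.

Lemma dotv_le_of_enorm_le (L : R) u z : 0 <= L ->
  enorm u <= L * enorm z -> dotv u u <= L ^+ 2 * dotv z z.
Proof.
move=> L0 uz; rewrite -!sqr_enorm -exprMn ler_pXn2r ?nnegrE ?mulr_ge0 ?sqrtr_ge0 //.
Qed.

Lemma dotv_le_young (L : R) u z m : 0 <= L -> dotv u u <= L ^+ 2 * dotv z z ->
  dotv u m <= L / 2 * (dotv z z + dotv m m).
Proof.
move=> L0 uz; have [L_eq0|Lneq0] := eqVneq L 0.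
  rewrite L_eq0 in uz *; have u0 : dotv u u = 0.
    by apply/eqP; rewrite eq_le dotv_ge0 andbT; move: uz; rewrite expr2 !mul0r.
  by rewrite /dotv big1 ?mul0r // => i _; rewrite (dotv_self_eq0 u0) mul0r.
have Lgt0 : 0 < L by rewrite lt_neqAle eq_sym Lneq0.
have young : 2 * dotv u m <= dotv u u / L + L * dotv m m.
  rewrite /dotv mulr_sumr mulr_sumr mulr_suml -big_split /=; apply: ler_sum => i _.
  rewrite -subr_ge0.
  have -> : u 0 i * u 0 i / L + L * (m 0 i * m 0 i) - 2 * (u 0 i * m 0 i)
          = (u 0 i - L * m 0 i) ^+ 2 / L by field; rewrite gt_eqF.
  by rewrite divr_ge0 ?sqr_ge0 // ltW.
have uzL : dotv u u / L <= L * dotv z z.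
  by rewrite ler_pdivrMr //; apply: (le_trans uz); rewrite expr2; lra.
have := dotv_ge0 m; nra.
Qed.

End dotv.

Section sq_integrable_vec.
Context {R : realType} {dT : measure_display} {T : measurableType dT} {d : nat}.
Variable P : probability T R.
Implicit Types (V W : T -> 'rV[R]_d).

Definition sq_integrable_vec V := forall i, sq_integrable P (fun w => V w 0 i).

Lemma sq_integrable_vec_cst (c : 'rV[R]_d) : sq_integrable_vec (fun _ => c).
Proof. by move=> i; exact: sq_integrable_cst. Qed.

Lemma sq_integrable_vecD V W : sq_integrable_vec V -> sq_integrable_vec W ->
  sq_integrable_vec (fun w => V w + W w).
Proof.
by move=> iV iW i; under eq_fun do rewrite mxE; exact: sq_integrableD.
Qed.

Lemma sq_integrable_vecZ c V : sq_integrable_vec V ->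
  sq_integrable_vec (fun w => c *: V w).
Proof. by move=> iV i; under eq_fun do rewrite mxE; exact: sq_integrableZ. Qed.

Lemma sq_integrable_vecB V W : sq_integrable_vec V -> sq_integrable_vec W ->
  sq_integrable_vec (fun w => V w - W w).
Proof.
move=> iV iW; apply: sq_integrable_vecD => // i.
by under eq_fun do rewrite mxE -mulN1r; exact: sq_integrableZ.
Qed.

Lemma integrableR_dotv V W : sq_integrable_vec V -> sq_integrable_vec W ->
  integrableR P (fun w => dotv (V w) (W w)).
Proof. by move=> iV iW; apply: integrableR_sum => i; exact: sq_integrable_mul. Qed.

Lemma Rintegral_dotv V W : sq_integrable_vec V -> sq_integrable_vec W ->
  \int[P]_w dotv (V w) (W w) = \sum_i \int[P]_w (V w 0 i * W w 0 i).
Proof. by move=> iV iW; apply: Rintegral_sum => i; exact: sq_integrable_mul. Qed.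

End sq_integrable_vec.

Lemma sum_pow_shift (R : comPzRingType) (a : R) (F : nat -> R) t :
  \sum_(1 <= k < t.+1) a ^+ (t.+1 - k) * F k = a * \sum_(1 <= k < t.+1) a ^+ (t - k) * F k.
Proof.
rewrite mulr_sumr; apply: eq_big_nat => k /andP[_ kt].
by rewrite subSn // exprS mulrA.
Qed.

Lemma sum_pow_recr (R : comPzRingType) (a : R) (F : nat -> R) t :
  \sum_(1 <= k < t.+2) a ^+ (t.+1 - k) * F k =
  \sum_(1 <= k < t.+1) a ^+ (t.+1 - k) * F k + F t.+1.
Proof. by rewrite big_nat_recr //= subnn expr0 mul1r. Qed.

Section sum_iteration.
Context (R : realType) (d : nat) (gradf : 'rV[R]_d -> 'rV[R]_d) (L : R)
  (dT : measure_display) (T : measurableType dT) (P : probability T R)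
  (g : nat -> T -> 'rV[R]_d) (x1 : 'rV[R]_d) (mu lam G : R) (eta : nat -> R).
Hypothesis hL : 0 <= L.
Hypothesis hLip : forall x y, enorm (gradf x - gradf y) <= L * enorm (x - y).
Hypothesis hmu : 0 <= mu < 1.
Hypothesis hlam : 0 <= lam <= 1 / (1 - mu).
Hypothesis hgmeas : forall t (i : 'I_d), (1 <= t)%N ->
  measurable_fun setT (fun w => g t w 0 i).
Hypothesis hcond : forall t, (1 <= t)%N ->
  cond_exp_past P g t (fun w => gradf (sum_x mu lam eta x1 (g^~ w) t)).
Hypothesis hG : forall t, (1 <= t)%N ->
  (\int[P]_w ((enorm (g t w)) ^+ 2)%:E <= (G ^+ 2)%:E)%E.

Let X t w := sum_x mu lam eta x1 (g^~ w) t.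
Let M t w := sum_m mu lam eta x1 (g^~ w) t.
Let Y t w := gradf (X t w).

Lemma sq_integrable_noise t : (1 <= t)%N -> sq_integrable_vec P (g t).
Proof.
move=> t1; have mgg : measurable_fun setT (fun w => dotv (g t w) (g t w)).
  by apply: measurable_sum => i; apply: measurable_funM; exact: hgmeas.
have igg : integrableR P (fun w => dotv (g t w) (g t w)).
  apply/integrableP; split; first exact/measurable_EFinP.
  under eq_fun do rewrite /= ger0_norm ?dotv_ge0 // -sqr_enorm.
  exact: le_lt_trans (hG t1) (ltry _).
by move=> i; apply: (sq_integrable_le (hgmeas i t1) igg) => w; exact: sqr_coord_le_dotv.
Qed.

Lemma sq_integrable_state n :
  sq_integrable_vec P (fun w => (sum_state mu lam eta x1 (g^~ w) n).1) /\
  sq_integrable_vec P (fun w => (sum_state mu lam eta x1 (g^~ w) n).2).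
Proof.
elim: n => [|n [ix im]]; first by split; exact: sq_integrable_vec_cst.
have ig := sq_integrable_noise (ltn0Sn n).
have im' : sq_integrable_vec P (fun w => (sum_state mu lam eta x1 (g^~ w) n.+1).2).
  by apply: sq_integrable_vecB; exact: sq_integrable_vecZ.
split => //; apply: sq_integrable_vecD; last exact: sq_integrable_vecZ.
by apply: sq_integrable_vecB => //; exact: sq_integrable_vecZ.
Qed.

Lemma sq_integrable_x t : sq_integrable_vec P (X t).
Proof. exact: (sq_integrable_state t.-1).1. Qed.

Lemma sq_integrable_m t : sq_integrable_vec P (M t).
Proof. exact: (sq_integrable_state t).2. Qed.

Lemma past_measurable t A : <<s past_gen g t >> A -> measurable A.
Proof.
apply: smallest_sub; first exact: sigma_algebra_measurable.
move=> _ [k [i [B [/andP[k1 _] mB ->]]]].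
by have := hgmeas i k1 measurableT mB; rewrite setTI.
Qed.

Lemma sq_integrable_grad t : sq_integrable_vec P (Y t).
Proof.
move=> i; have mY : measurable_fun setT (fun w => Y t w 0 i).
  case: t => [|t]; first exact: measurable_cst (gradf x1 0 i).
  have [_ _ hpre _] := hcond (ltn0Sn t) i.
  by move=> _ B mB; rewrite setTI; exact: past_measurable (hpre B mB).
pose D w := dotv (X t w - x1) (X t w - x1).
have iD : integrableR P D.
  by apply: integrableR_dotv; apply: sq_integrable_vecB;
    [exact: sq_integrable_x | exact: sq_integrable_vec_cst | exact: sq_integrable_x
    | exact: sq_integrable_vec_cst].
have ibound : integrableR P (fun w => 2 * dotv (gradf x1) (gradf x1) + 2 * (L ^+ 2 * D w)).
  by apply: integrableRD; [exact: integrableR_cst | do 2 apply: integrableRZ].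
apply: (sq_integrable_le mY ibound) => w.
apply: le_trans (sqr_coord_le_dotv _ i) _.
rewrite -(subrK (gradf x1) (Y t w)) addrC; apply: le_trans (dotvD_self_le _ _) _.
by rewrite lerD2l ler_pM2l //; apply: dotv_le_of_enorm_le => //; exact: hLip.
Qed.

Lemma Rintegral_grad_dot_noise t : (1 <= t)%N ->
  \int[P]_w dotv (Y t w) (g t w) = \int[P]_w dotv (Y t w) (Y t w).
Proof.
move=> t1; have iY := sq_integrable_grad t; have ig := sq_integrable_noise t1.
rewrite !Rintegral_dotv //; apply: eq_bigr => i _.
have [ig_i iY_i Ymeas Yint] := hcond t1 i.
apply: (tower_property (@past_measurable t) ig_i iY_i Yint Ymeas);
  exact: sq_integrable_mul.
Qed.

Lemma Rintegral_noise_sqr_le t : (1 <= t)%N ->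
  \int[P]_w dotv (g t w) (g t w) <= G ^+ 2.
Proof.
move=> t1; have ig := sq_integrable_noise t1.
rewrite -lee_fin -Rintegral_EFin; last exact: integrableR_dotv.
by under eq_integral do rewrite -sqr_enorm; exact: hG.
Qed.

Let a t := \int[P]_w dotv (Y t w) (M t w).
Let b t := \int[P]_w dotv (Y t w) (Y t w).
Let c t := \int[P]_w dotv (M t w) (M t w).
Let e t := \int[P]_w dotv (Y t w) (M t.-1 w).

Lemma a_eq t : (1 <= t)%N -> a t = mu * e t - eta t * b t.
Proof.
case: t => // t _.
have iY := sq_integrable_grad t.+1; have im := sq_integrable_m t.
have ig := sq_integrable_noise (ltn0Sn t).
rewrite /a /e /b -Rintegral_grad_dot_noise // -!RintegralZl //; try exact: integrableR_dotv.
rewrite -RintegralB //; try by apply: integrableRZ; exact: integrableR_dotv.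
by apply: eq_Rintegral => w _; rewrite /M /sum_m /= dotvBr !dotvZr.
Qed.

Lemma e1 : e 1 = 0.
Proof.
rewrite /e /M /sum_m /=; under eq_Rintegral do rewrite dotv0r.
by rewrite Rintegral_cst // mul0r.
Qed.

Let kappa := 1 - (1 - mu) * lam.

Lemma kappa_bounds : 0 <= kappa <= 1.
Proof.
case/andP: hmu => mu0 mu1; case/andP: hlam => lam0 lam1.
have mu1' : 0 < 1 - mu by rewrite subr_gt0.
have : (1 - mu) * lam <= 1 by rewrite mulrC -ler_pdivlMr // mul1r -[X in _ <= X]mul1r.
have : 0 <= (1 - mu) * lam by rewrite mulr_ge0 // ltW.
rewrite /kappa; lra.
Qed.

Lemma grad_dot_m_step n w :
  dotv (Y n.+2 w) (M n.+1 w) <= dotv (Y n.+1 w) (M n.+1 w)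
    + L * (lam * eta n.+1) ^+ 2 * dotv (g n.+1 w) (g n.+1 w)
    + 2 * L * dotv (M n.+1 w) (M n.+1 w).
Proof.
set A := lam * eta n.+1; set gg := g n.+1 w; set m := M n.+1 w.
have step : X n.+2 w - X n.+1 w = (- A) *: gg + kappa *: m.
  by rewrite /X /M /sum_x /sum_m /= scaleNr addrC !addrA addNr add0r.
have -> : dotv (Y n.+2 w) m = dotv (Y n.+1 w) m + dotv (Y n.+2 w - Y n.+1 w) m.
  by rewrite dotvBl addrC subrK.
rewrite -addrA lerD2l.
apply: le_trans (dotv_le_young _ hL (dotv_le_of_enorm_le hL (hLip _ _))) _.
rewrite step.
have sq := dotvD_self_le ((- A) *: gg) (kappa *: m).
rewrite !dotvZl !dotvZr in sq.
have gg0 := dotv_ge0 gg; have m0 := dotv_ge0 m.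
case/andP: kappa_bounds => k0 k1.
have kk : kappa * kappa <= 1 by nra.
have km : kappa * (kappa * dotv m m) <= dotv m m by nra.
have L2 : 0 <= L / 2 by rewrite divr_ge0.
apply: (@le_trans _ _ (L / 2 * (2 * (A * A * dotv gg gg) + 3 * dotv m m))).
  by rewrite ler_wpM2l //; move: sq; rewrite ?mulNr ?mulrN ?opprK; lra.
have := mulr_ge0 hL m0; rewrite expr2; lra.
Qed.

Lemma e_step n :
  e n.+2 <= a n.+1 + 2 * L * c n.+1 + L * lam ^+ 2 * G ^+ 2 * eta n.+1 ^+ 2.
Proof.
have iY1 := sq_integrable_grad n.+1; have iY2 := sq_integrable_grad n.+2.
have im := sq_integrable_m n.+1; have ig := sq_integrable_noise (ltn0Sn n).
have iYm := integrableR_dotv iY1 im; have igg := integrableR_dotv ig ig.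
have imm := integrableR_dotv im im.
have igg' : integrableR P (fun w => L * (lam * eta n.+1) ^+ 2 * dotv (g n.+1 w) (g n.+1 w)).
  exact: integrableRZ.
have imm' : integrableR P (fun w => 2 * L * dotv (M n.+1 w) (M n.+1 w)).
  exact: integrableRZ.
apply: le_trans (le_Rintegral measurableT _ _ (fun w _ => grad_dot_m_step n w)) _.
- exact: integrableR_dotv.
- by apply: integrableRD => //; exact: integrableRD.
rewrite !RintegralD //; last exact: integrableRD.
rewrite !RintegralZl // -/(a n.+1) -/(c n.+1).
have := Rintegral_noise_sqr_le (ltn0Sn n).
have : 0 <= L * (lam * eta n.+1) ^+ 2 by rewrite mulr_ge0 ?sqr_ge0.
rewrite exprMn; nra.
Qed.

Definition a_bound t := - \sum_(1 <= k < t.+1) mu ^+ (t - k) * (eta k * b k)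
  + 2 * L * \sum_(1 <= k < t) mu ^+ (t - k) * c k
  + L * lam ^+ 2 * G ^+ 2 * \sum_(1 <= k < t) mu ^+ (t - k) * eta k ^+ 2.

Lemma a_bound_succ n : a_bound n.+2 =
  mu * (a_bound n.+1 + 2 * L * c n.+1 + L * lam ^+ 2 * G ^+ 2 * eta n.+1 ^+ 2)
  - eta n.+2 * b n.+2.
Proof.
rewrite /a_bound (sum_pow_recr mu (fun k => eta k * b k) n.+1).
rewrite (sum_pow_shift mu (fun k => eta k * b k) n.+1).
rewrite (sum_pow_shift mu c n.+1) (sum_pow_recr mu c n).
rewrite (sum_pow_shift mu (fun k => eta k ^+ 2) n.+1) (sum_pow_recr mu (fun k => eta k ^+ 2) n).
ring.
Qed.

Lemma a_le_bound n : a n.+1 <= a_bound n.+1.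
Proof.
case/andP: hmu => mu0 _; elim: n => [|n IH].
  by rewrite a_eq // e1 /a_bound !big_nat1 !big_geq // subnn expr0 !mul1r; lra.
rewrite a_eq // a_bound_succ lerD2r ler_wpM2l //.
by have := e_step n; lra.
Qed.

Lemma Rintegral_grad_dot_m_le t : (1 <= t)%N ->
  (\int[P]_w (dotv (Y t w) (M t w))%:E
   <= - (\sum_(1 <= k < t.+1)
           (mu ^+ (t - k) * eta k)%:E * \int[P]_w ((enorm (Y k w)) ^+ 2)%:E)
      + (2 * L)%:E * (\sum_(1 <= k < t)
           (mu ^+ (t - k))%:E * \int[P]_w ((enorm (M k w)) ^+ 2)%:E)
      + (L * lam ^+ 2 * G ^+ 2 * \sum_(1 <= k < t) mu ^+ (t - k) * eta k ^+ 2)%:E)%E.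
Proof.
have Eb k : (\int[P]_w ((enorm (Y k w)) ^+ 2)%:E)%E = (b k)%:E.
  have iY := sq_integrable_grad k.
  by rewrite -Rintegral_EFin ?integrableR_dotv //; under eq_integral do rewrite sqr_enorm.
have Ec k : (\int[P]_w ((enorm (M k w)) ^+ 2)%:E)%E = (c k)%:E.
  have im := sq_integrable_m k.
  by rewrite -Rintegral_EFin ?integrableR_dotv //; under eq_integral do rewrite sqr_enorm.
rewrite Rintegral_EFin; last exact: integrableR_dotv (sq_integrable_grad t) (sq_integrable_m t).
under eq_bigr do rewrite Eb -EFinM -mulrA.
under [X in ((2 * L)%:E * X)%E]eq_bigr do rewrite Ec -EFinM.
rewrite !sumEFin -EFinN -EFinM -!EFinD lee_fin.
by case: t => // n _; exact: a_le_bound.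
Qed.

End sum_iteration.

Theorem lemma3p4 (R : realType) (d : nat)
  (f : 'rV[R]_d -> R) (gradf : 'rV[R]_d -> 'rV[R]_d) (L : R)
  (dT : measure_display) (T : measurableType dT) (P : probability T R)
  (g : nat -> T -> 'rV[R]_d) (x1 : 'rV[R]_d)
  (mu lam G : R) (eta : nat -> R)
  (hf : forall x, differentiable f x /\ (forall v, 'd f x v = dotv (gradf x) v))
  (hL : 0 <= L)
  (hLip : forall x y, enorm (gradf x - gradf y) <= L * enorm (x - y))
  (hmu : 0 <= mu < 1)
  (hlam : 0 <= lam <= 1 / (1 - mu))
  (heta : forall t, (1 <= t)%N -> 0 < eta t)
  (hgmeas : forall t (i : 'I_d), (1 <= t)%N -> measurable_fun setT (fun w => g t w 0 i))
  (hcond : forall t, (1 <= t)%N ->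
     cond_exp_past P g t (fun w => gradf (sum_x mu lam eta x1 (g^~ w) t)))
  (hG : forall t, (1 <= t)%N ->
     (\int[P]_w ((enorm (g t w)) ^+ 2)%:E <= (G ^+ 2)%:E)%E)
  (t : nat) (ht : (1 <= t)%N) :
  (\int[P]_w (dotv (gradf (sum_x mu lam eta x1 (g^~ w) t))
                   (sum_m mu lam eta x1 (g^~ w) t))%:E
   <= - (\sum_(1 <= k < t.+1)
           (mu ^+ (t - k) * eta k)%:E
           * \int[P]_w ((enorm (gradf (sum_x mu lam eta x1 (g^~ w) k))) ^+ 2)%:E)
      + (2 * L)%:E * (\sum_(1 <= k < t)
           (mu ^+ (t - k))%:E
           * \int[P]_w ((enorm (sum_m mu lam eta x1 (g^~ w) k)) ^+ 2)%:E)
      + (L * lam ^+ 2 * G ^+ 2 * \sum_(1 <= k < t) mu ^+ (t - k) * eta k ^+ 2)%:E)%E.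
Proof. exact: Rintegral_grad_dot_m_le hL hLip hmu hlam hgmeas hcond hG t ht. Qed.
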